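(* Let $\sigma_a$ be any attacker mixed strategy and $0<\epsilon\le n$. Run the greedy algorithm on the function $g(\cdot\mid\sigma_a)$ with a budget of $\ln\left(\frac{n}{\epsilon}\right)k_d$ elements, producing a set $S_d$. Then $$\mathbb{E}_{S_a\sim\sigma_a}[f(S_d,S_a)]\le\min_{|S^*|\le k_d}\mathbb{E}_{S_a\sim\sigma_a}[f(S^*,S_a)]+\epsilon.$$
   Context: Setting: $n$ voters $V$, channels $C$, edge probabilities $p_{uv},q_{uv}\in[0,1]$ (0 for non-edges), known preferences $\theta_v\in\{0,1\}$, and $f(S_d,S_a)=\sum_{v\in V}\theta_v\left(\prod_{u\in S_d}(1-q_{uv})\right)\left(1-\prod_{u\in S_a}(1-p_{uv})\right)$. An attacker mixed strategy $\sigma_a$ is a distribution over subsets of $C$ of size at most $k_a$. Define $g(S_d\mid\sigma_a)=\mathbb{E}_{S_a\sim\sigma_a}[f(\emptyset,S_a)-f(S_d,S_a)]$. The greedy algorithm with budget $B$ starts from $\emptyset$ and for $B$ steps adds a channel maximizing the marginal gain of $g$. *)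

From HB Require Import structures.
From mathcomp Require Import all_boot all_order all_algebra.
From mathcomp Require Import reals exp.
Set Implicit Arguments. Unset Strict Implicit. Unset Printing Implicit Defensive.
Import Order.TTheory GRing.Theory Num.Theory.
Local Open Scope ring_scope.

Section Defs.
Variables (R : realType) (V C : finType).

(* Influence objective: p u v, q u v are edge probabilities from channel u to
   voter v (attacker / defender), theta v the known preference. *)
Definition f (p q : C -> V -> R) (theta : V -> bool)
    (Sd Sa : {set C}) : R :=
  \sum_(v : V) (theta v)%:R *
     ((\prod_(u in Sd) (1 - q u v)) * (1 - \prod_(u in Sa) (1 - p u v))).

Definition attacker_mixed (ka : nat) (sigma : {set C} -> R) : Prop :=
  (forall S : {set C}, 0 <= sigma S) /\ (\sum_(S : {set C}) sigma S = 1) /\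
  (forall S : {set C}, (ka < #|S|)%N -> sigma S = 0).

Definition expected_f p q theta (sigma : {set C} -> R) (Sd : {set C}) : R :=
  \sum_(Sa : {set C}) sigma Sa * f p q theta Sd Sa.

Definition g p q theta (sigma : {set C} -> R) (Sd : {set C}) : R :=
  \sum_(Sa : {set C}) sigma Sa * (f p q theta set0 Sa - f p q theta Sd Sa).

Definition greedy_run (h : {set C} -> R) (B : nat) (s : seq C) : Prop :=
  size s = B /\
  forall (i : nat) (c0 : C), (i < B)%N ->
    let Si := [set x in take i s] in
    forall c : C,
      h (c |: Si) - h Si <= h (nth c0 s i |: Si) - h Si.

End Defs.

From HB Require Import structures.
From mathcomp Require Import all_boot all_order all_algebra.
From mathcomp Require Import reals exp sequences.
From mathcomp Require Import lra ring.
Import Order.TTheory GRing.Theory Num.Theory.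
Local Open Scope ring_scope.
Set Implicit Arguments. Unset Strict Implicit.

(* [g] is a nonnegative combination, with weights at most 1, of the coverage
   functions X |-> 1 - prod_(u in X) (1 - q u v), one per voter v.  Hence it is
   monotone, bounded by n, and its gain on S over T is at most the sum of the
   single-channel gains on T.  If |S_opt| <= k_d, each greedy step therefore
   closes a 1/k_d fraction of the gap g(S_opt) - g(S_i), so after
   B >= ln(n/eps) k_d steps the gap is at most (1 - 1/k_d)^B n <= e^(-B/k_d) n
   <= eps.  It remains to note that E f(S, .) = E f(emptyset, .) - g(S). *)

Lemma subr_invn_ge0 (R : numFieldType) (k : nat) :
  (0 < k)%N -> 0 <= 1 - k%:R^-1 :> R.
Proof. by move=> k_gt0; rewrite subr_ge0 invf_le1 ?ler1n ?ltr0n. Qed.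

Section Miss.
Variables (R : realDomainType) (C : finType) (r : C -> R).
Hypothesis r01 : forall u, 0 <= r u <= 1.

Definition miss (S : {set C}) : R := \prod_(u in S) (1 - r u).

Lemma miss01 (S : {set C}) : 0 <= miss S <= 1.
Proof.
apply: (big_ind (fun x : R => 0 <= x <= 1)) => [|x y|u _].
- by rewrite ler01 lexx.
- by move=> /andP[x0 x1] /andP[y0 y1]; rewrite mulr_ge0 //= mulr_ile1.
- by have := r01 u; lra.
Qed.

Lemma miss_setD (A B : {set C}) : A \subset B -> miss B = miss A * miss (B :\: A).
Proof. by move=> sAB; rewrite /miss (big_setID A) /= (setIidPr sAB). Qed.

Lemma miss_le_subset (A B : {set C}) : A \subset B -> miss B <= miss A.
Proof.
move=> sAB; rewrite (miss_setD sAB).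
by have := miss01 A; have := miss01 (B :\: A); nra.
Qed.

Lemma miss_setU1 (c : C) (T : {set C}) :
  c \notin T -> miss (c |: T) = miss T * (1 - r c).
Proof.
move=> cT; rewrite (miss_setD (subsetUr [set c] T)) setDUl setDv setU0.
by rewrite (setDidPl _) ?disjoints1 // /miss big_set1.
Qed.

Lemma subr1_miss_le_sum (S : {set C}) : 1 - miss S <= \sum_(u in S) r u.
Proof.
suff [] : 0 <= miss S <= 1 /\ 1 - miss S <= \sum_(u in S) r u by [].
apply: (big_rec2 (fun x y : R => 0 <= x <= 1 /\ 1 - x <= y)).
  by rewrite ler01 lexx subrr.
by move=> u x y _ [x01 IH]; have := r01 u; split; nra.
Qed.

Lemma miss_marginal (T S : {set C}) :
  miss T - miss S <= \sum_(c in S) (miss T - miss (c |: T)).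
Proof.
have missT01 := miss01 T.
apply: (@le_trans _ _ (miss T - miss (S :|: T))).
  by rewrite lerB // miss_le_subset // subsetUl.
rewrite (miss_setD (subsetUr S T)) setDUl setDv setU0.
apply: (@le_trans _ _ (miss T * \sum_(c in S :\: T) r c)).
  by have := subr1_miss_le_sum (S :\: T); nra.
rewrite [X in _ <= X](big_setID T) /= mulr_sumr -[X in X <= _]add0r; apply: lerD.
  by apply: sumr_ge0 => c _; rewrite subr_ge0 miss_le_subset // subsetUr.
apply: ler_sum => c /setDP[_ cT]; rewrite miss_setU1 //; lra.
Qed.
End Miss.

Section Greedy.
Variables (R : realType) (C : finType) (h : {set C} -> R).
Hypothesis h_mono : forall A B : {set C}, A \subset B -> h A <= h B.
Hypothesis h_marginal :
  forall T S : {set C}, h S - h T <= \sum_(c in S) (h (c |: T) - h T).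
Variables (k B : nat) (s : seq C) (Sstar : {set C}).
Hypotheses (greedy_s : greedy_run h B s) (Sstar_k : (#|Sstar| <= k)%N)
  (k_gt0 : (0 < k)%N).

Let gap i := h Sstar - h [set x in take i s].

Lemma greedy_gap_step i : (i < B)%N -> gap i.+1 <= (1 - k%:R^-1) * gap i.
Proof.
move=> iB; have [size_s greedy] := greedy_s.
have c0 : C by case: s size_s iB => [<-|].
set S := [set x in take i s]; set d := h (nth c0 s i |: S) - h S.
have take_succ : [set x in take i.+1 s] = nth c0 s i |: S.
  by apply/setP => x; rewrite (take_nth c0) ?size_s // !inE mem_rcons in_cons.
have d_ge0 : 0 <= d by rewrite subr_ge0 h_mono // subsetUr.
have gap_le : gap i <= k%:R * d.
  apply: le_trans (h_marginal S Sstar) _.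
  apply: (@le_trans _ _ (\sum_(c in Sstar) d)).
    by apply: ler_sum => c _; exact: greedy.
  by rewrite sumr_const -[X in X <= _]mulr_natl (ler_wpM2r d_ge0) // ler_nat.
have -> : gap i.+1 = gap i - d by rewrite /gap take_succ /d; ring.
by rewrite mulrBl mul1r lerD2l lerN2 ler_pdivrMl ?ltr0n.
Qed.

Lemma greedy_gap_le :
  h Sstar - h [set x in s] <= (1 - k%:R^-1) ^+ B * (h Sstar - h set0).
Proof.
have gap_iter i : (i <= B)%N -> gap i <= (1 - k%:R^-1) ^+ i * gap 0.
  elim: i => [|i IH] iB; first by rewrite expr0 mul1r.
  apply: le_trans (greedy_gap_step iB) _.
  by rewrite exprS -mulrA (ler_wpM2l (subr_invn_ge0 R k_gt0)) // IH // ltnW.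
have [size_s _] := greedy_s.
by move: (gap_iter B (leqnn B)); rewrite /gap take0 -size_s take_size set_nil.
Qed.
End Greedy.

Lemma exp_decay_le_inv (R : realType) (k B : nat) (x : R) :
  (0 < k)%N -> 0 < x -> ln x * k%:R <= B%:R -> (1 - k%:R^-1) ^+ B <= x^-1.
Proof.
move=> k_gt0 x_gt0 budget.
have k_pos : 0 < k%:R :> R by rewrite ltr0n.
apply: (@le_trans _ _ (expR (- k%:R^-1) ^+ B)).
  by apply: lerXn2r; rewrite ?nnegrE ?expR_ge0 ?expR_ge1Dx ?subr_invn_ge0.
rewrite -expRM_natl -[x in _ <= x^-1]lnK ?posrE // -expRN ler_expR mulrN lerN2.
by rewrite ler_pdivlMr.
Qed.

Section Influence.
Variables (R : realType) (V C : finType) (p q : C -> V -> R) (theta : V -> bool)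
  (sigma : {set C} -> R).
Hypotheses (p01 : forall u v, 0 <= p u v <= 1)
  (q01 : forall u v, 0 <= q u v <= 1).
Hypotheses (sigma_ge0 : forall S, 0 <= sigma S) (sigma_sum1 : \sum_S sigma S = 1).

Definition attack_prob (v : V) : R :=
  \sum_(Sa : {set C}) sigma Sa * ((theta v)%:R * (1 - miss (p^~ v) Sa)).

Let G := g p q theta sigma.

Lemma gE (X : {set C}) : G X = \sum_(v : V) attack_prob v * (1 - miss (q^~ v) X).
Proof.
rewrite /G /g; under [RHS]eq_bigr do rewrite mulr_suml.
rewrite [RHS]exchange_big; apply: eq_bigr => Sa _.
rewrite /f -sumrB mulr_sumr; apply: eq_bigr => v _.
by rewrite /miss big_set0; ring.
Qed.

Let theta_hit01 v Sa : 0 <= (theta v)%:R * (1 - miss (p^~ v) Sa) <= 1.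
Proof.
by have := miss01 (p01^~ v) Sa; case: (theta v); rewrite ?mul1r ?mul0r; lra.
Qed.

Lemma attack_prob_ge0 v : 0 <= attack_prob v.
Proof.
by apply: sumr_ge0 => Sa _; have := theta_hit01 v Sa; have := sigma_ge0 Sa; nra.
Qed.

Lemma attack_prob_le1 v : attack_prob v <= 1.
Proof.
rewrite -sigma_sum1; apply: ler_sum => Sa _.
by have := theta_hit01 v Sa; have := sigma_ge0 Sa; nra.
Qed.

Lemma g_sub (A B : {set C}) :
  G A - G B = \sum_(v : V) attack_prob v * (miss (q^~ v) B - miss (q^~ v) A).
Proof. by rewrite !gE -sumrB; apply: eq_bigr => v _; ring. Qed.

Lemma g_set0 : G set0 = 0.
Proof. by rewrite gE big1 // => v _; rewrite /miss big_set0 subrr mulr0. Qed.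

Lemma g_mono (A B : {set C}) : A \subset B -> G A <= G B.
Proof.
move=> sAB; rewrite -subr_ge0 g_sub; apply: sumr_ge0 => v _.
have := attack_prob_ge0 v; have := miss_le_subset (q01^~ v) sAB; nra.
Qed.

Lemma g_marginal (T S : {set C}) : G S - G T <= \sum_(c in S) (G (c |: T) - G T).
Proof.
under eq_bigr do rewrite g_sub.
rewrite g_sub exchange_big /=; apply: ler_sum => v _; rewrite -mulr_sumr.
by have := attack_prob_ge0 v; have := miss_marginal (q01^~ v) T S; nra.
Qed.

Lemma g_le_card (S : {set C}) : G S <= #|V|%:R.
Proof.
have -> : #|V|%:R = \sum_(v : V) 1 :> R by rewrite sumr_const.
rewrite gE; apply: ler_sum => v _.
have := attack_prob_ge0 v; have := attack_prob_le1 v; have := miss01 (q01^~ v) S.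
nra.
Qed.

Lemma expected_fE (S : {set C}) :
  expected_f p q theta sigma S = expected_f p q theta sigma set0 - G S.
Proof. by rewrite /G /g /expected_f -sumrB; apply: eq_bigr => Sa _; ring. Qed.

End Influence.

Theorem mainTheorem5 (R : realType) (V C : finType)
    (p q : C -> V -> R) (theta : V -> bool) (ka kd : nat)
    (sigma : {set C} -> R) (eps : R) (B : nat) (s : seq C) :
  (forall u v, 0 <= p u v <= 1) ->
  (forall u v, 0 <= q u v <= 1) ->
  attacker_mixed ka sigma ->
  0 < eps -> eps <= #|V|%:R ->
  (* B = ceil(ln(n / eps) * kd), the budget of the greedy algorithm *)
  B%:R - 1 < ln (#|V|%:R / eps) * kd%:R ->
  ln (#|V|%:R / eps) * kd%:R <= B%:R ->
  greedy_run (g p q theta sigma) B s ->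
  forall Sstar : {set C}, (#|Sstar| <= kd)%N ->
    expected_f p q theta sigma [set x in s]
      <= expected_f p q theta sigma Sstar + eps.
Proof.
(* A larger budget can only help. *)
move=> p01 q01 [sigma_ge0 [sigma_sum1 _]] eps_gt0 eps_le_n _ budget greedy.
move=> Sstar Sstar_kd.
rewrite (expected_fE _ _ _ _ [set x in s]) (expected_fE _ _ _ _ Sstar).
set G := g p q theta sigma; suff : G Sstar - G [set x in s] <= eps by lra.
have G_mono : forall X Y : {set C}, X \subset Y -> G X <= G Y.
  by move=> X Y; apply: g_mono.
have G_set0 : G set0 = 0 := g_set0 p q theta sigma.
have [kd0|kd_gt0] := posnP kd.
  move: Sstar_kd; rewrite kd0 leqn0 cards_eq0 => /eqP->.
  by have := G_mono _ _ (sub0set [set x in s]); rewrite G_set0; lra.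
have n_gt0 : 0 < #|V|%:R :> R := lt_le_trans eps_gt0 eps_le_n.
have decay := exp_decay_le_inv kd_gt0 (divr_gt0 n_gt0 eps_gt0) budget.
have G_le_n : G Sstar <= #|V|%:R by apply: g_le_card.
have G_ge0 : 0 <= G Sstar by rewrite -G_set0 G_mono ?sub0set.
apply: le_trans (greedy_gap_le G_mono _ greedy Sstar_kd kd_gt0) _.
  by move=> T S; apply: g_marginal.
rewrite G_set0 subr0 -(divfK (lt0r_neq0 n_gt0) eps) -invf_div.
by apply: ler_pM => //; rewrite exprn_ge0 ?subr_invn_ge0.
Qed.
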